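(* Let $\mathfrak L_1,\dots,\mathfrak L_n,\mathfrak L$ be complete lattices, let $(\mathcal F_\alpha)_{\alpha\in\mathcal O}$ with $\mathcal F_\alpha:\mathfrak L_1\times\dots\times\mathfrak L_n\to(\mathfrak L\to^+\mathfrak L)$ be a family that is $\limsup$-pushable in all arguments, and let $\phi:\mathcal O\to\mathcal O$ be monotone. Then for every nonzero limit ordinal $\lambda\in\mathcal O$ and all $\vec{\mathcal G}=(\mathcal G_1,\dots,\mathcal G_n)$ with $\mathcal G_i:\mathcal O\to\mathfrak L_i$, $$\limsup_{\alpha\to\lambda}\nu^{\phi(\alpha)}\big(\mathcal F_\alpha(\vec{\mathcal G}_\alpha)\big)\sqsubseteq\nu^{\liminf_\lambda\phi}\big(\mathcal F_\lambda(\limsup_\lambda\vec{\mathcal G})\big).$$ If moreover $\phi$ is affine, then even $$\limsup_{\alpha\to\lambda}\nu^{\phi(\alpha)}\big(\mathcal F_\alpha(\vec{\mathcal G}_\alpha)\big)\sqsubseteq\nu^{\phi(\lambda)}\big(\mathcal F_\lambda(\limsup_\lambda\vec{\mathcal G})\big).$$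
   Context: $\mathcal O$ is the set of ordinals $\le\top_{\mathsf{ord}}$ for a fixed ordinal $\top_{\mathsf{ord}}$ ($=\beth_\omega$). For $f:\mathcal O\to\mathfrak L$ into a complete lattice and a nonzero limit $\lambda$: $\liminf_\lambda f=\liminf_{\alpha\to\lambda}f(\alpha)=\sup_{\alpha_0<\lambda}\inf_{\alpha_0\le\alpha<\lambda}f(\alpha)$, $\limsup_\lambda f=\limsup_{\alpha\to\lambda}f(\alpha)=\inf_{\alpha_0<\lambda}\sup_{\alpha_0\le\alpha<\lambda}f(\alpha)$; on products of lattices, componentwise. $\mathfrak L\to^+\mathfrak L$ is the set of monotone maps. For $f:\mathfrak L\to\mathfrak L$, $g\in\mathfrak L$: $f^0(g)=g$, $f^{\alpha+1}(g)=f(f^\alpha(g))$, $f^\lambda(g)=\limsup_{\alpha\to\lambda}f^\alpha(g)$; $\nu^\alpha f:=f^\alpha(\top)$. A family $(\mathcal F_\alpha)_{\alpha\in\mathcal O}$ of maps $\mathfrak K\to\mathfrak K'$ is $\limsup$-pushable if for every $\mathcal G:\mathcal O\to\mathfrak K$ and nonzero limit $\lambda$: $\limsup_{\alpha\to\lambda}\mathcal F_\gamma(\mathcal G_\alpha)\sqsubseteq\mathcal F_\gamma(\limsup_{\alpha\to\lambda}\mathcal G_\alpha)$ for all $\gamma\in\mathcal O$, and $\limsup_{\alpha\to\lambda}\mathcal F_\alpha(\mathcal G_\alpha)\sqsubseteq\mathcal F_\lambda(\limsup_{\alpha\to\lambda}\mathcal G_\alpha)$. ''$\limsup$-pushable in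 all arguments'' means the family $(\vec{\mathcal G},\mathcal X)\mapsto\mathcal F_\alpha(\vec{\mathcal G})(\mathcal X)$ on $\mathfrak L_1\times\dots\times\mathfrak L_n\times\mathfrak L$ is $\limsup$-pushable. A function $\phi:\mathcal O\to\mathcal O$ is affine if $\phi(\alpha)=\min\{b\alpha+\beta,\top_{\mathsf{ord}}\}$ for some $b\in\{0,1\}$ and $\beta\in\mathcal O$. *)

From Stdlib Require Import ClassicalEpsilon.
From mathcomp Require Import all_boot.

Set Implicit Arguments.
Unset Strict Implicit.

Record complete_lattice := CompleteLattice {
  carrier :> Type;
  le : carrier -> carrier -> Prop;
  le_refl : forall x, le x x;
  le_trans : forall x y z, le x y -> le y z -> le x z;
  le_antisym : forall x y, le x y -> le y x -> x = y;
  sup : (carrier -> Prop) -> carrier;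
  sup_ub : forall (S : carrier -> Prop) x, S x -> le x (sup S);
  sup_least : forall (S : carrier -> Prop) y,
      (forall x, S x -> le x y) -> le (sup S) y
}.

Arguments le {c} _ _.
Arguments sup {c} _.

Definition lt {L : complete_lattice} (x y : L) : Prop := le x y /\ x <> y.

Definition inf {L : complete_lattice} (S : L -> Prop) : L :=
  sup (fun y => forall x, S x -> le y x).

Definition top (L : complete_lattice) : L := sup (fun _ => True).
Definition bot (L : complete_lattice) : L := sup (fun _ => False).

Definition monotone {L L' : complete_lattice} (f : L -> L') : Prop :=
  forall x y, le x y -> le (f x) (f y).

(** * The ordinal lattice O: a complete lattice whose order is a well-order
    (ordinals [0, top_ord]).  *)
Definition is_wellorder (O : complete_lattice) : Prop :=
  (forall x y : O, le x y \/ le y x) /\ well_founded (@lt O).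

Definition is_succ {O : complete_lattice} (alpha beta : O) : Prop :=
  lt alpha beta /\ forall g, lt alpha g -> le beta g.

Definition is_limit {O : complete_lattice} (lam : O) : Prop :=
  lam <> bot O /\ forall a, lt a lam -> exists b, lt a b /\ lt b lam.

Definition limsup {O L : complete_lattice} (lam : O) (u : O -> L) : L :=
  inf (fun y => exists a0, lt a0 lam /\
         y = sup (fun z => exists a, le a0 a /\ lt a lam /\ z = u a)).

Definition liminf {O L : complete_lattice} (lam : O) (u : O -> L) : L :=
  sup (fun y => exists a0, lt a0 lam /\
         y = inf (fun z => exists a, le a0 a /\ lt a lam /\ z = u a)).

Definition is_iteration {O L : complete_lattice} (f : L -> L) (g : L)
    (h : O -> L) : Prop :=
  h (bot O) = g /\
  (forall a b : O, is_succ a b -> h b = f (h a)) /\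
  (forall lam : O, is_limit lam -> h lam = limsup lam h).

(** the (unique, O being well-ordered) function satisfying the recursion *)
Definition iter {O L : complete_lattice} (f : L -> L) (g : L) : O -> L :=
  epsilon (inhabits (fun _ : O => g)) (is_iteration f g).

Definition nu {O L : complete_lattice} (alpha : O) (f : L -> L) : L :=
  iter f (top L) alpha.

(** * Capped ordinal addition min{alpha + beta, top}:
    alpha + beta is the gamma >= alpha with [alpha, gamma) order-isomorphic to
    [0, beta); if no such gamma <= top exists, alpha + beta > top. *)
Definition seg_iso {O : complete_lattice} (alpha gamma beta : O) : Prop :=
  le alpha gamma /\
  exists f : O -> O,
    (forall x y, le alpha x -> lt x y -> lt y gamma -> lt (f x) (f y)) /\
    (forall x, le alpha x -> lt x gamma -> lt (f x) beta) /\
    (forall z, lt z beta -> exists x, le alpha x /\ lt x gamma /\ f x = z).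

Definition capped_add {O : complete_lattice} (alpha beta : O) : O :=
  epsilon (inhabits (top O))
    (fun gamma => seg_iso alpha gamma beta \/
        ((~ exists g, seg_iso alpha g beta) /\ gamma = top O)).

(** phi is affine: phi(alpha) = min{b*alpha + beta, top}, b in {0,1} *)
Definition affine {O : complete_lattice} (phi : O -> O) : Prop :=
  exists beta : O,
    (forall a, phi a = beta) \/ (forall a, phi a = capped_add a beta).

(** * limsup-pushable in all arguments, for a family
    F_alpha : L_1 x ... x L_n -> (L -> L), viewed as the family
    (G, X) |-> F_alpha(G)(X) on L_1 x ... x L_n x L (limsup componentwise). *)
Definition limsup_pushable_all {O L : complete_lattice} {n : nat}
    {Ls : 'I_n -> complete_lattice}
    (F : O -> (forall i, Ls i) -> L -> L) : Prop :=
  forall (G : forall i, O -> Ls i) (X : O -> L) (lam : O), is_limit lam ->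
    (forall gam : O,
       le (limsup lam (fun a => F gam (fun i => G i a) (X a)))
          (F gam (fun i => limsup lam (G i)) (limsup lam X))) /\
    le (limsup lam (fun a => F a (fun i => G i a) (X a)))
       (F lam (fun i => limsup lam (G i)) (limsup lam X)).

(* By well-founded induction on b one pushes the limsup at
   lam through b iterations starting from top: at a successor through one more
   application of F (pushability at the diagonal), at a limit through the
   limsup that defines the iterate, using that nu^b is antitone in b.  This
   gives limsup_a nu^b (F_a (G_a)) <= nu^b (F_lam (limsup G)).  Every b below
   liminf phi is eventually below phi a, so antitonicity yields the first
   bound.  For affine phi: a constant phi is trivially eventually above its
   value; for phi a = a + beta >= a the bound at lam suffices, because
   pushability at gamma = lam makes nu^lam (F_lam (limsup G)) a fixed point,
   so the iteration is stationary from lam on. *)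
From Pilot Require Import Defs.
From Stdlib Require Import Classical ClassicalEpsilon FunctionalExtensionality.
From mathcomp Require Import all_boot.

Set Implicit Arguments.
Unset Strict Implicit.

Lemma inf_lb (L : complete_lattice) (S : L -> Prop) x : S x -> le (inf S) x.
Proof. intros Sx. apply sup_least. intros y Hy. exact (Hy x Sx). Qed.

Lemma inf_glb (L : complete_lattice) (S : L -> Prop) y :
  (forall x, S x -> le y x) -> le y (inf S).
Proof. intros Hy. exact (sup_ub (S := fun y => forall x, S x -> le y x) Hy). Qed.

Lemma le_top (L : complete_lattice) (x : L) : le x (top L).
Proof. exact (sup_ub (S := fun _ => True) I). Qed.

Lemma bot_le (L : complete_lattice) (x : L) : le (bot L) x.
Proof. apply sup_least. intros y []. Qed.

Lemma lt_not_le (O : complete_lattice) (x y : O) : lt x y -> ~ le y x.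
Proof. intros [Hxy Hne] Hyx. exact (Hne (le_antisym Hxy Hyx)). Qed.

Lemma le_lt_trans (O : complete_lattice) (x y z : O) : le x y -> lt y z -> lt x z.
Proof.
  intros Hxy [Hyz Hne]. split; [exact (le_trans Hxy Hyz)|].
  intros <-. exact (Hne (le_antisym Hyz Hxy)).
Qed.

Lemma lt_le_trans (O : complete_lattice) (x y z : O) : lt x y -> le y z -> lt x z.
Proof.
  intros [Hxy Hne] Hyz. split; [exact (le_trans Hxy Hyz)|].
  intros <-. exact (Hne (le_antisym Hxy Hyz)).
Qed.

Lemma limit_succ_lt (O : complete_lattice) (a s lam : O) :
  is_limit lam -> lt a lam -> is_succ a s -> lt s lam.
Proof.
  intros [_ Hlam] Ha [_ Hs]. destruct (Hlam a Ha) as [b [Hab Hb]].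
  exact (le_lt_trans (Hs b Hab) Hb).
Qed.

Lemma bot_lt_limit (O : complete_lattice) (lam : O) : is_limit lam -> lt (bot O) lam.
Proof. intros [Hne _]. split; [apply bot_le|]. intros E. apply Hne. now symmetry. Qed.

Section WellOrder.

Variable O : complete_lattice.
Hypothesis Owo : is_wellorder O.

Lemma le_total (x y : O) : le x y \/ le y x.
Proof. exact (proj1 Owo x y). Qed.

Lemma not_le_lt (x y : O) : ~ le x y -> lt y x.
Proof.
  intros Hn. destruct (le_total x y) as [Hxy|Hyx]; [contradiction|].
  split; [exact Hyx|]. intros ->. exact (Hn (le_refl _)).
Qed.

Lemma exists_least (P : O -> Prop) x : P x -> exists m, P m /\ forall y, P y -> le m y.
Proof.
  induction x as [x IH] using (well_founded_ind (proj2 Owo)). intros Px.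
  destruct (classic (exists y, lt y x /\ P y)) as [[y [Hyx Py]]|Hmin].
  - exact (IH y Hyx Py).
  - exists x. split; [exact Px|]. intros y Py.
    apply NNPP. intros Hxy. apply Hmin. exists y. split; [exact (not_le_lt Hxy)|exact Py].
Qed.

Lemma succ_exists (a lam : O) : lt a lam -> exists s, is_succ a s /\ le s lam.
Proof.
  intros Ha. destruct (exists_least (P := lt a) Ha) as [s [Has Hleast]].
  exists s. split; [split|]; auto.
Qed.

Lemma ordinal_cases (d : O) : d = bot O \/ (exists g, is_succ g d) \/ is_limit d.
Proof.
  destruct (classic (d = bot O)) as [Hd|Hd]; [now left|right].
  destruct (classic (exists g, is_succ g d)) as [Hs|Hs]; [now left|right].
  split; [exact Hd|]. intros a Ha. destruct (succ_exists Ha) as [s [Has Hsd]].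
  exists s. split; [exact (proj1 Has)|]. split; [exact Hsd|].
  intros ->. apply Hs. exists a. exact Has.
Qed.

Lemma le_of_lt_succ (g d b : O) : is_succ g d -> lt b d -> le b g.
Proof.
  intros [_ Hmin] Hbd. apply NNPP. intros Hbg.
  exact (lt_not_le Hbd (Hmin b (not_le_lt Hbg))).
Qed.

Lemma succ_inj (a c b : O) : is_succ a b -> is_succ c b -> a = c.
Proof.
  intros Ha Hc. apply le_antisym.
  - exact (le_of_lt_succ Hc (proj1 Ha)).
  - exact (le_of_lt_succ Ha (proj1 Hc)).
Qed.

Lemma lt_liminf (lam : O) (phi : O -> O) (b : O) :
  lt b (liminf lam phi) ->
  exists a0, lt a0 lam /\ forall a, le a0 a -> lt a lam -> lt b (phi a).
Proof.
  intros Hb. apply NNPP. intros Hn. apply (lt_not_le Hb). apply sup_least.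
  intros y [a0 [Ha0 ->]]. apply NNPP. intros Hinf. apply Hn.
  exists a0. split; [exact Ha0|]. intros a Ha0a Ha.
  apply (lt_le_trans (not_le_lt Hinf)). apply inf_lb. now exists a.
Qed.

End WellOrder.

Lemma le_capped_add (O : complete_lattice) (a b : O) : le a (capped_add a b).
Proof.
  unfold capped_add.
  assert (Hex : exists g, seg_iso a g b \/ ((~ exists g, seg_iso a g b) /\ g = top O)).
  { destruct (classic (exists g, seg_iso a g b)) as [[g Hg]|Hn].
    - exists g. now left.
    - exists (top O). now right. }
  destruct (epsilon_spec (inhabits (top O)) _ Hex) as [[Hle _]|[_ ->]].
  - exact Hle.
  - apply le_top.
Qed.

Section Limsup.

Variables O L : complete_lattice.

Definition tail (lam a0 : O) (u : O -> L) : L :=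
  sup (fun z => exists a, le a0 a /\ lt a lam /\ z = u a).

Lemma tail_ub (lam a0 a : O) (u : O -> L) :
  le a0 a -> lt a lam -> le (u a) (tail lam a0 u).
Proof. intros Ha0 Ha. apply sup_ub. now exists a. Qed.

Lemma tail_least (lam a0 : O) (u : O -> L) c :
  (forall a, le a0 a -> lt a lam -> le (u a) c) -> le (tail lam a0 u) c.
Proof. intros Hc. apply sup_least. intros z [a [Ha0 [Ha ->]]]. auto. Qed.

Lemma limsup_le_tail (lam a0 : O) (u : O -> L) :
  lt a0 lam -> le (limsup lam u) (tail lam a0 u).
Proof. intros Ha0. apply inf_lb. now exists a0. Qed.

Lemma limsup_glb (lam : O) (u : O -> L) c :
  (forall a0, lt a0 lam -> le c (tail lam a0 u)) -> le c (limsup lam u).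
Proof. intros Hc. apply inf_glb. intros y [a0 [Ha0 ->]]. exact (Hc a0 Ha0). Qed.

Lemma limsup_ge (lam : O) (u : O -> L) c :
  (forall a, lt a lam -> le c (u a)) -> le c (limsup lam u).
Proof.
  intros Hc. apply limsup_glb. intros a0 Ha0.
  exact (le_trans (Hc a0 Ha0) (tail_ub u (le_refl a0) Ha0)).
Qed.

Lemma limsup_mono (lam : O) (u v : O -> L) :
  (forall a, lt a lam -> le (u a) (v a)) -> le (limsup lam u) (limsup lam v).
Proof.
  intros Huv. apply limsup_glb. intros a0 Ha0.
  apply (le_trans (limsup_le_tail u Ha0)). apply tail_least. intros a Ha0a Ha.
  exact (le_trans (Huv a Ha) (tail_ub v Ha0a Ha)).
Qed.

Lemma limsup_ext (lam : O) (u v : O -> L) :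
  (forall a, lt a lam -> u a = v a) -> limsup lam u = limsup lam v.
Proof.
  intros Huv. apply le_antisym; apply limsup_mono; intros a Ha; rewrite Huv //; apply le_refl.
Qed.

Lemma limsup_const (lam : O) (c : L) : is_limit lam -> limsup lam (fun _ => c) = c.
Proof.
  intros Hlam. apply le_antisym.
  - apply (le_trans (limsup_le_tail _ (bot_lt_limit Hlam))).
    apply tail_least. intros. apply le_refl.
  - apply limsup_ge. intros. apply le_refl.
Qed.

Lemma limsup_mono_eventually (Owo : is_wellorder O) (lam a1 : O) (u v : O -> L) :
  lt a1 lam -> (forall a, le a1 a -> lt a lam -> le (u a) (v a)) ->
  le (limsup lam u) (limsup lam v).
Proof.
  intros Ha1 Huv. apply limsup_glb. intros a0 Ha0.
  destruct (le_total Owo a0 a1) as [H01|H10].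
  - apply (le_trans (limsup_le_tail u Ha1)). apply tail_least. intros a Ha1a Ha.
    exact (le_trans (Huv a Ha1a Ha) (tail_ub v (le_trans H01 Ha1a) Ha)).
  - apply (le_trans (limsup_le_tail u Ha0)). apply tail_least. intros a Ha0a Ha.
    exact (le_trans (Huv a (le_trans H10 Ha0a) Ha) (tail_ub v Ha0a Ha)).
Qed.

End Limsup.

Section Iteration.

Variables O L : complete_lattice.
Hypothesis Owo : is_wellorder O.
Variables (f : L -> L) (g : L).

(* Well-founded recursion only provides the values below [a]; [extend_below]
   makes them a total function on [O] (the junk value [g] is never read). *)
Definition extend_below (a : O) (r : forall b, lt b a -> L) (b : O) : L :=
  match excluded_middle_informative (lt b a) with
  | left Hb => r b Hb
  | right _ => g
  end.

Definition predecessor (a : O) : O := epsilon (inhabits a) (fun b => is_succ b a).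

Definition iteration_step (a : O) (r : forall b, lt b a -> L) : L :=
  match excluded_middle_informative (a = bot O) with
  | left _ => g
  | right _ =>
      match excluded_middle_informative (exists b, is_succ b a) with
      | left _ => f (extend_below r (predecessor a))
      | right _ => limsup a (extend_below r)
      end
  end.

Definition iteration_rec : O -> L := Fix (proj2 Owo) (fun _ => L) iteration_step.

Lemma extend_below_ext (a : O) (r1 r2 : forall b, lt b a -> L) :
  (forall b Hb, r1 b Hb = r2 b Hb) -> forall b, extend_below r1 b = extend_below r2 b.
Proof.
  intros Hr b. unfold extend_below.
  destruct (excluded_middle_informative (lt b a)); [apply Hr|reflexivity].
Qed.

Lemma iteration_rec_eq (a : O) :
  iteration_rec a = iteration_step (a := a) (fun b _ => iteration_rec b).
Proof.
  apply (Fix_eq (proj2 Owo) (fun _ => L) iteration_step).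
  intros x r1 r2 Hr. pose proof (extend_below_ext Hr) as Hext. unfold iteration_step.
  destruct (excluded_middle_informative (x = bot O)); [reflexivity|].
  destruct (excluded_middle_informative (exists b, is_succ b x)).
  - now rewrite Hext.
  - apply limsup_ext. intros b _. apply Hext.
Qed.

Lemma extend_below_lt (a b : O) (h : O -> L) :
  lt b a -> extend_below (fun c (_ : lt c a) => h c) b = h b.
Proof.
  intros Hb. unfold extend_below.
  destruct (excluded_middle_informative (lt b a)); [reflexivity|contradiction].
Qed.

Lemma iteration_exists : exists h : O -> L, is_iteration f g h.
Proof.
  exists iteration_rec. split; [|split].
  - rewrite iteration_rec_eq. unfold iteration_step.
    destruct (excluded_middle_informative (bot O = bot O)); [reflexivity|contradiction].
  - intros a b Hab. rewrite iteration_rec_eq. unfold iteration_step.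
    destruct (excluded_middle_informative (b = bot O)) as [->|_].
    { exfalso. exact (lt_not_le (proj1 Hab) (bot_le a)). }
    destruct (excluded_middle_informative (exists c, is_succ c b)) as [Hs|Hs].
    2: { exfalso. apply Hs. now exists a. }
    assert (Hpred : is_succ (predecessor b) b) by (unfold predecessor; apply epsilon_spec; now exists a).
    rewrite (succ_inj Owo Hpred Hab) extend_below_lt //. exact (proj1 Hab).
  - intros lam Hlam. rewrite iteration_rec_eq. unfold iteration_step.
    destruct (excluded_middle_informative (lam = bot O)) as [Hbot|_].
    { exfalso. exact (proj1 Hlam Hbot). }
    destruct (excluded_middle_informative (exists c, is_succ c lam)) as [[c Hc]|_].
    { exfalso. destruct (proj2 Hlam c (proj1 Hc)) as [b [Hcb Hb]].
      exact (lt_not_le Hb (proj2 Hc b Hcb)). }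
    apply limsup_ext. intros a Ha. exact (extend_below_lt _ Ha).
Qed.

End Iteration.

Section Nu.

Variables O L : complete_lattice.
Hypothesis Owo : is_wellorder O.
Variable f : L -> L.

Lemma iter_is_iteration (g : L) : is_iteration f g (@Defs.iter O L f g).
Proof. unfold Defs.iter. apply epsilon_spec. exact (iteration_exists Owo f g). Qed.

Lemma nu_bot : nu (bot O) f = top L.
Proof. exact (proj1 (iter_is_iteration (top L))). Qed.

Lemma nu_succ (a b : O) : is_succ a b -> nu b f = f (nu a f).
Proof. exact (proj1 (proj2 (iter_is_iteration (top L))) a b). Qed.

Lemma nu_limit (lam : O) : is_limit lam -> nu lam f = limsup lam (fun a => nu a f).
Proof. exact (proj2 (proj2 (iter_is_iteration (top L))) lam). Qed.

Hypothesis Hf : monotone f.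

Lemma nu_antitone_postfixed (d : O) :
  (forall b, le b d -> le (nu d f) (nu b f)) /\ le (f (nu d f)) (nu d f).
Proof.
  induction d as [d IH] using (well_founded_ind (proj2 Owo)).
  destruct (ordinal_cases Owo d) as [->|[[g Hg]|Hd]].
  - split.
    + intros b Hb. rewrite (le_antisym Hb (bot_le b)). apply le_refl.
    + rewrite nu_bot. apply le_top.
  - destruct (IH g (proj1 Hg)) as [Hanti Hpost].
    rewrite (nu_succ Hg). split.
    + intros b Hb. destruct (classic (b = d)) as [->|Hne].
      * rewrite (nu_succ Hg). apply le_refl.
      * exact (le_trans Hpost (Hanti b (le_of_lt_succ Owo Hg (conj Hb Hne)))).
    + exact (Hf Hpost).
  - have Hanti : forall b, le b d -> le (nu d f) (nu b f).
    { intros b Hb. destruct (classic (b = d)) as [->|Hne]; [apply le_refl|].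
      rewrite (nu_limit Hd). apply (le_trans (limsup_le_tail _ (conj Hb Hne))).
      apply tail_least. intros a Hba Ha. exact (proj1 (IH a Ha) b Hba). }
    split; [exact Hanti|].
    rewrite {2}(nu_limit Hd). apply limsup_glb. intros a0 Ha0.
    destruct (succ_exists Owo Ha0) as [s [Hs _]].
    apply (le_trans (Hf (Hanti a0 (proj1 Ha0)))). rewrite -(nu_succ Hs).
    exact (tail_ub _ (proj1 (proj1 Hs)) (limit_succ_lt Hd Ha0 Hs)).
Qed.

Lemma nu_antitone (b d : O) : le b d -> le (nu d f) (nu b f).
Proof. exact (proj1 (nu_antitone_postfixed d) b). Qed.

Lemma nu_postfixed (d : O) : le (f (nu d f)) (nu d f).
Proof. exact (proj2 (nu_antitone_postfixed d)). Qed.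

Lemma nu_fixpoint_stationary (c d : O) :
  f (nu c f) = nu c f -> le c d -> nu d f = nu c f.
Proof.
  intros Hfix. induction d as [d IH] using (well_founded_ind (proj2 Owo)). intros Hcd.
  destruct (classic (c = d)) as [->|Hne]; [reflexivity|].
  destruct (ordinal_cases Owo d) as [->|[[g Hg]|Hd]].
  - exfalso. exact (Hne (le_antisym Hcd (bot_le c))).
  - rewrite (nu_succ Hg) IH //; [exact (proj1 Hg)|exact (le_of_lt_succ Owo Hg (conj Hcd Hne))].
  - apply le_antisym; [exact (nu_antitone Hcd)|].
    rewrite (nu_limit Hd). apply limsup_ge. intros a Ha.
    destruct (le_total Owo a c) as [Hac|Hca].
    + exact (nu_antitone Hac).
    + rewrite IH //. apply le_refl.
Qed.

Lemma nu_limit_fixpoint (lam : O) :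
  is_limit lam -> le (limsup lam (fun a => f (nu a f))) (f (nu lam f)) ->
  f (nu lam f) = nu lam f.
Proof.
  intros Hlam Hpush. apply le_antisym; [exact (nu_postfixed lam)|].
  apply: le_trans Hpush. apply limsup_ge. intros a Ha.
  destruct (succ_exists Owo Ha) as [s [Hs Hslam]].
  rewrite -(nu_succ Hs). exact (nu_antitone Hslam).
Qed.

End Nu.

Section Pushable.

Variables (O L : complete_lattice) (n : nat) (Ls : 'I_n -> complete_lattice).
Hypothesis Owo : is_wellorder O.
Variable F : O -> (forall i, Ls i) -> L -> L.
Hypothesis Fmono : forall a g, monotone (F a g).
Hypothesis Fpush : limsup_pushable_all F.
Variables (lam : O) (G : forall i, O -> Ls i).
Hypothesis Hlam : is_limit lam.

Local Notation F_at a := (F a (fun i => G i a)).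
Local Notation F_lim := (F lam (fun i => limsup lam (G i))).

Lemma limsup_nu_le_nu_limsup (b : O) :
  le (limsup lam (fun a => nu b (F_at a))) (nu b F_lim).
Proof.
  induction b as [b IH] using (well_founded_ind (proj2 Owo)).
  destruct (ordinal_cases Owo b) as [->|[[g Hg]|Hb]].
  - rewrite nu_bot //. apply le_top.
  - rewrite (nu_succ Owo _ Hg).
    rewrite (limsup_ext (v := fun a => F_at a (nu g (F_at a)))); [|intros a _; exact (nu_succ Owo _ Hg)].
    apply (le_trans (proj2 (Fpush G (fun a => nu g (F_at a)) Hlam))).
    exact (Fmono _ _ (IH g (proj1 Hg))).
  - rewrite (nu_limit Owo _ Hb). apply limsup_ge. intros c Hc.
    refine (le_trans (limsup_mono (fun a _ => nu_antitone Owo (Fmono a _) (proj1 Hc))) _).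
    exact (IH c Hc).
Qed.

Lemma nu_limit_is_fixpoint : F_lim (nu lam F_lim) = nu lam F_lim.
Proof.
  apply (nu_limit_fixpoint Owo (Fmono _ _) Hlam).
  have Hpush := proj1 (Fpush (fun i _ => limsup lam (G i)) (fun a => nu a F_lim) Hlam) lam.
  have Hconst : (fun i => limsup lam (fun _ : O => limsup lam (G i))) = (fun i => limsup lam (G i))
    := functional_extensionality_dep _ _ (fun i => limsup_const _ Hlam).
  cbv beta in Hpush. rewrite Hconst -(nu_limit Owo _ Hlam) in Hpush. exact Hpush.
Qed.

Lemma limsup_nu_le_of_eventually_ge (phi : O -> O) (c : O) :
  (exists a0, lt a0 lam /\ forall a, le a0 a -> lt a lam -> le c (phi a)) ->
  le (limsup lam (fun a => nu (phi a) (F_at a))) (nu c F_lim).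
Proof.
  intros [a0 [Ha0 Hc]]. apply (le_trans (y := limsup lam (fun a => nu c (F_at a)))).
  - apply (limsup_mono_eventually Owo Ha0). intros a Ha0a Ha.
    exact (nu_antitone Owo (Fmono _ _) (Hc a Ha0a Ha)).
  - exact (limsup_nu_le_nu_limsup c).
Qed.

Lemma limsup_nu_le_of_eventually_gt (phi : O -> O) (mu : O) :
  (forall b, lt b mu -> exists a0, lt a0 lam /\ forall a, le a0 a -> lt a lam -> lt b (phi a)) ->
  le (limsup lam (fun a => nu (phi a) (F_at a))) (nu mu F_lim).
Proof.
  intros Hev. destruct (ordinal_cases Owo mu) as [->|[[g Hg]|Hmu]].
  - rewrite nu_bot //. apply le_top.
  - apply limsup_nu_le_of_eventually_ge.
    destruct (Hev g (proj1 Hg)) as [a0 [Ha0 Hgt]]. exists a0. split; [exact Ha0|].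
    intros a Ha0a Ha. exact (proj2 Hg _ (Hgt a Ha0a Ha)).
  - rewrite (nu_limit Owo _ Hmu). apply limsup_ge. intros b Hb.
    apply limsup_nu_le_of_eventually_ge.
    destruct (Hev b Hb) as [a0 [Ha0 Hgt]]. exists a0. split; [exact Ha0|].
    intros a Ha0a Ha. exact (proj1 (Hgt a Ha0a Ha)).
Qed.

End Pushable.

Unset Implicit Arguments.

Theorem theorem4p15 (O : complete_lattice) (Owo : is_wellorder O)
  (n : nat) (Ls : 'I_n -> complete_lattice) (L : complete_lattice)
  (F : O -> (forall i, Ls i) -> L -> L)
  (Fmono : forall (a : O) (g : forall i, Ls i), monotone (F a g))
  (Fpush : limsup_pushable_all F)
  (phi : O -> O) (phimono : monotone phi) :
  (forall (lam : O) (G : forall i, O -> Ls i), is_limit lam ->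
     le (limsup lam (fun a => nu (phi a) (F a (fun i => G i a))))
        (nu (liminf lam phi) (F lam (fun i => limsup lam (G i))))) /\
  (affine phi ->
   forall (lam : O) (G : forall i, O -> Ls i), is_limit lam ->
     le (limsup lam (fun a => nu (phi a) (F a (fun i => G i a))))
        (nu (phi lam) (F lam (fun i => limsup lam (G i))))).
Proof.
  split.
  - intros lam G Hlam. apply (limsup_nu_le_of_eventually_gt Owo Fmono Fpush G Hlam).
    intros b Hb. exact (lt_liminf Owo Hb).
  - intros [beta [Hconst|Hadd]] lam G Hlam.
    + rewrite (Hconst lam). apply (limsup_nu_le_of_eventually_gt Owo Fmono Fpush G Hlam).
      intros b Hb. exists (bot O). split; [exact (bot_lt_limit Hlam)|].
      intros a _ _. rewrite Hconst. exact Hb.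
    + have Hge : forall a, le a (phi a) by (intros a; rewrite Hadd; apply le_capped_add).
      rewrite (nu_fixpoint_stationary Owo (Fmono _ _)
                 (nu_limit_is_fixpoint Owo Fmono Fpush G Hlam) (Hge lam)).
      apply (limsup_nu_le_of_eventually_gt Owo Fmono Fpush G Hlam).
      intros b Hb. destruct (succ_exists Owo Hb) as [s [Hs _]].
      exists s. split; [exact (limit_succ_lt Hlam Hb Hs)|].
      intros a Hsa _. exact (lt_le_trans (proj1 Hs) (le_trans Hsa (Hge a))).
Qed.
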